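(* Let $N_0,N_1\ge 0$ with $N_0+N_1=N$. The square matrix $M=M(N_0,N_1)$, with rows and columns indexed by the words of length $N$ having $N_0$ zeros and $N_1$ ones, with entry $M_{w,w'}=q^{g(w,w')}$ if $w'$ is feasible for $w$ and $M_{w,w'}=0$ otherwise ($q$ an indeterminate), is invertible.
   Context: A link pattern on a finite totally ordered set is a partition into pairs that are pairwise noncrossing (no $i<j<k<\ell$ with $\{i,k\}$ and $\{j,\ell\}$ both pairs). An extended link pattern $\pi$ on $\{1,\dots,N\}$ consists of integers $\ell_1<\dots<\ell_a$ (left points) and $r_1<\dots<r_b\le N$ (right points), with every left point smaller than every right point, together with a link pattern on each maximal interval of integers of $\{1,\dots,N\}$ containing no left or right point. Its word $\mathbf w(\pi)\in\{0,1\}^N$ has $w_{\ell_k}=1$, $w_{r_k}=0$, and for each pair $\{i<j\}$ of the link patterns $w_i=0$, $w_j=1$; $\mathbf w$ is a bijection onto $\{0,1\}^N$. A directed extended link pattern is an extended link pattern in which, in each pair of the link patterns, one element is declared the source and the other the sink; left points are sinks and right points are sources. $RL$ of it is the number of pairs whose larger element is the source. Its source-sink word $w$ has $w_i=0$ iff $i$ is a source. A word $w'$ is feasible for $w$ if there exists a directed extended link pattern whose underlying extended link pattern is $\mathbf w^{-1}(w')$ and whose source-sink word is $w$; this directed pattern is then unique and $g(w,w')$ is its $RL$. *)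

From HB Require Import structures.
From mathcomp Require Import all_boot all_order all_algebra.
Set Implicit Arguments. Unset Strict Implicit. Unset Printing Implicit Defensive.
Import Order.TTheory GRing.Theory Num.Theory.

(* Positions {1,...,N} are represented by 'I_N = {0,...,N-1} (same order).
   Letters: 0 = false, 1 = true.  Words of length N: {ffun 'I_N -> bool}. *)

(* An extended link pattern: left points L, right points R, and the set P of
   pairs (i, j) with i < j of the link patterns. *)
Definition is_elp (N : nat) (L R : {set 'I_N}) (P : {set 'I_N * 'I_N}) : bool :=
  [&& [disjoint L & R],
      [forall l in L, forall r in R, l < r],
      [forall p in P, p.1 < p.2],
      [forall x, (x \in L :|: R) == ~~ [exists p in P, (p.1 == x) || (p.2 == x)]],
      [forall p in P, forall p' in P, (p != p') ==>
          [&& p.1 != p'.1, p.1 != p'.2, p.2 != p'.1 & p.2 != p'.2]],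
      [forall p in P, forall p' in P,
          ~~ [&& p.1 < p'.1, p'.1 < p.2 & p.2 < p'.2]] &
      [forall p in P, forall x in L :|: R, ~~ ((p.1 < x) && (x < p.2))]].

Definition elp_word (N : nat) (L R : {set 'I_N}) (P : {set 'I_N * 'I_N})
    (x : 'I_N) : bool :=
  if x \in L then true
  else if x \in R then false
  else [exists p in P, p.2 == x].

(* A directed extended link pattern (L, R, P, S): S is the set of pairs whose
   larger element is the source (the others have their smaller element as
   source).  Left points are sinks, right points are sources. *)
Definition delp (N : nat) :=
  ({set 'I_N} * {set 'I_N} * {set 'I_N * 'I_N} * {set 'I_N * 'I_N})%type.

Definition is_delp (N : nat) (d : delp N) : bool :=
  is_elp d.1.1.1 d.1.1.2 d.1.2 && (d.2 \subset d.1.2).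

Definition RL (N : nat) (d : delp N) : nat := #|d.2|.

(* source-sink word: letter 0 (false) iff source *)
Definition ss_word (N : nat) (d : delp N) (x : 'I_N) : bool :=
  if x \in d.1.1.1 then true
  else if x \in d.1.1.2 then false
  else [exists p in d.1.2, ((p.2 == x) && (p \notin d.2))
                           || ((p.1 == x) && (p \in d.2))].

(* d witnesses feasibility of w' for w: its underlying extended link pattern
   is w^{-1}(w') (i.e. has word w') and its source-sink word is w. *)
Definition feasible_for (N : nat) (w w' : {ffun 'I_N -> bool}) (d : delp N) : bool :=
  [&& is_delp d,
      [forall x, elp_word d.1.1.1 d.1.1.2 d.1.2 x == w' x] &
      [forall x, ss_word d x == w x]].

Definition feasible (N : nat) (w w' : {ffun 'I_N -> bool}) : bool :=
  [exists d, feasible_for w w' d].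

Definition Mentry (N : nat) (w w' : {ffun 'I_N -> bool}) : {poly int} :=
  match [pick d | feasible_for w w' d] with
  | Some d => 'X ^+ RL d
  | None => 0
  end.

Definition words (N0 N1 : nat) :=
  {w : {ffun 'I_(N0 + N1) -> bool} |
     (#|[set x | ~~ w x]| == N0) && (#|[set x | w x]| == N1)}.

Definition Mmat (N0 N1 : nat) : 'M[{poly int}]_#|{: words N0 N1}| :=
  \matrix_(i, j) Mentry (val (enum_val i)) (val (enum_val j)).

From HB Require Import structures.
From mathcomp Require Import all_boot all_order all_algebra.
From mathcomp Require Import fingroup perm zify.
Set Implicit Arguments. Unset Strict Implicit. Unset Printing Implicit Defensive.
Import Order.TTheory GRing.Theory Num.Theory.

(* Order the words by the weight [\sum_x w x * x].  If w' is feasible for w,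
   then w is obtained from w' by reversing the pairs counted by RL, and each
   reversed pair (i, j) moves a letter 1 from j down to i; so the weight of w'
   exceeds that of w by the total length of the reversed pairs.  Hence M is
   triangular for this order, with diagonal entries q^0 = 1: the diagonal is
   feasible through the pattern matching each 0 with the first later 1 that
   brings the lattice path of the word back to its height (all pairs directed
   left to right), and any pattern witnessing it has RL = 0.  So det M = 1. *)

Lemma perm_potential_le_eq n (s : 'S_n) (G : 'I_n -> nat) :
  (forall i, G i <= G (s i)) -> forall i, G (s i) = G i.
Proof.
move=> le_G i; apply/eqP; rewrite eq_sym eqn_leq le_G /=.
have sum_s : \sum_j G (s j) = \sum_j G j by rewrite [RHS](reindex_inj (@perm_inj _ s)).
rewrite leqNgt; apply/negP => lt_i.
have : \sum_j G j < \sum_j G (s j).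
  rewrite (bigD1 i) //= [X in _ < X](bigD1 i) //= -addSn leq_add //.
  exact: leq_sum.
by rewrite sum_s ltnn.
Qed.

Lemma det_potential_unitriangular (R : comNzRingType) n (A : 'M[R]_n)
    (G : 'I_n -> nat) :
  (forall i, A i i = 1%R) -> (forall i j, A i j != 0%R -> i = j \/ G i < G j) ->
  (\det A = 1)%R.
Proof.
move=> A_diag A_supp.
rewrite /determinant (bigD1 1%g) //= odd_perm1 expr0 mul1r.
rewrite big1 => [|i _]; last by rewrite perm1 A_diag.
rewrite big1 ?addr0 // => s s_ne1.
case: (pickP (fun i => A i (s i) == 0%R)) => [i /eqP Ai0|A_nz].
  by rewrite (bigD1 i) //= Ai0 mul0r mulr0.
have supp_s i : i = s i \/ G i < G (s i) by apply: A_supp; rewrite A_nz.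
have G_s : forall i, G (s i) = G i.
  by apply: perm_potential_le_eq => i; case: (supp_s i) => [<-|/ltnW].
case/eqP: s_ne1; apply/permP => i; rewrite perm1.
by case: (supp_s i) => [//|]; rewrite G_s ltnn.
Qed.

Section ExtendedLinkPattern.
Variables (N : nat) (L R : {set 'I_N}) (P : {set 'I_N * 'I_N}).
Hypothesis elpP : is_elp L R P.

Lemma elp_pair_lt p : p \in P -> p.1 < p.2.
Proof. by move: elpP; rewrite /is_elp => /and5P[] _ _ /forall_inP + _ _; apply. Qed.

Lemma elp_LR_endpoint x :
  (x \in L :|: R) = ~~ [exists p in P, (p.1 == x) || (p.2 == x)].
Proof. by move: elpP; rewrite /is_elp => /and5P[] _ _ _ /forallP /(_ x) /eqP. Qed.

Lemma elp_pairs_disjoint p q : p \in P -> q \in P -> p != q ->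
  [&& p.1 != q.1, p.1 != q.2, p.2 != q.1 & p.2 != q.2].
Proof.
move: elpP; rewrite /is_elp => /and5P[] _ _ _ _ /and3P[/forall_inP disj _ _] pP qP.
by apply/implyP; apply: (forall_inP (disj p pP)).
Qed.

Lemma elp_pair1_inj p q : p \in P -> q \in P -> p.1 = q.1 -> p = q.
Proof.
move=> pP qP eq1; apply/eqP/negP => /negP/(elp_pairs_disjoint pP qP).
by rewrite eq1 eqxx.
Qed.

Lemma elp_pair2_inj p q : p \in P -> q \in P -> p.2 = q.2 -> p = q.
Proof.
move=> pP qP eq2; apply/eqP/negP => /negP/(elp_pairs_disjoint pP qP).
by rewrite eq2 eqxx !andbF.
Qed.

Lemma elp_pair12_neq p q : p \in P -> q \in P -> p.1 != q.2.
Proof.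
move=> pP qP; case: (eqVneq p q) => [<-|/(elp_pairs_disjoint pP qP)/and4P[] //].
by rewrite neq_ltn elp_pair_lt.
Qed.

Lemma elp_pair_notLR p : p \in P -> (p.1 \notin L :|: R) && (p.2 \notin L :|: R).
Proof.
move=> pP; rewrite !elp_LR_endpoint !negbK.
by apply/andP; split; apply/exists_inP; exists p; rewrite ?eqxx ?orbT.
Qed.

Lemma elp_word_pair1 p : p \in P -> elp_word L R P p.1 = false.
Proof.
move=> pP; case/andP: (elp_pair_notLR pP).
rewrite /elp_word in_setU => /norP[/negbTE -> /negbTE ->] _.
by apply/exists_inP => -[q qP /eqP q2]; case/eqP: (elp_pair12_neq pP qP).
Qed.

Lemma elp_word_pair2 p : p \in P -> elp_word L R P p.2.
Proof.
move=> pP; case/andP: (elp_pair_notLR pP) => _.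
rewrite /elp_word in_setU => /norP[/negbTE -> /negbTE ->].
by apply/exists_inP; exists p.
Qed.

End ExtendedLinkPattern.

Definition weight (N : nat) (v : 'I_N -> bool) : nat := \sum_x v x * x.

Lemma eq_weight N (v v' : 'I_N -> bool) : v =1 v' -> weight v = weight v'.
Proof. by move=> eq_v; apply: eq_bigr => x _; rewrite eq_v. Qed.

Section DirectedLinkPattern.
Variables (N : nat) (d : delp N).
Hypothesis d_ok : is_delp d.
Local Notation L := d.1.1.1.
Local Notation R := d.1.1.2.
Local Notation P := d.1.2.
Local Notation S := d.2.

Let elpP : is_elp L R P. Proof. by case/andP: d_ok. Qed.
Let SP : S \subset P. Proof. by case/andP: d_ok. Qed.

Lemma ss_word_pair1 p : p \in P -> ss_word d p.1 = (p \in S).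
Proof.
move=> pP; case/andP: (elp_pair_notLR elpP pP).
rewrite /ss_word in_setU => /norP[/negbTE -> /negbTE ->] _.
apply/exists_inP/idP => [[q qP /orP[/andP[/eqP q2 _]|/andP[/eqP q1 qS]]]|pS].
- by case/eqP: (elp_pair12_neq elpP pP qP).
- by rewrite (elp_pair1_inj elpP pP qP (esym q1)).
- by exists p; rewrite ?eqxx ?pS ?orbT.
Qed.

Lemma ss_word_pair2 p : p \in P -> ss_word d p.2 = (p \notin S).
Proof.
move=> pP; case/andP: (elp_pair_notLR elpP pP) => _.
rewrite /ss_word in_setU => /norP[/negbTE -> /negbTE ->].
apply/exists_inP/idP => [[q qP /orP[/andP[/eqP q2 qS]|/andP[/eqP q1 _]]]|pS].
- by rewrite (elp_pair2_inj elpP pP qP (esym q2)).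
- by case/eqP: (elp_pair12_neq elpP qP pP).
- by exists p; rewrite ?eqxx ?pS.
Qed.

Lemma ss_word_LR x : x \in L :|: R -> ss_word d x = elp_word L R P x.
Proof. by rewrite /ss_word /elp_word in_setU; case: (x \in L) => //= ->. Qed.

Lemma pair1_in_imset1 p : p \in P -> (p.1 \in [set q.1 | q in S]) = (p \in S).
Proof.
move=> pP; apply/imsetP/idP => [[q qS q1]|pS]; last by exists p.
by rewrite (elp_pair1_inj elpP pP (subsetP SP q qS) q1).
Qed.

Lemma pair2_in_imset2 p : p \in P -> (p.2 \in [set q.2 | q in S]) = (p \in S).
Proof.
move=> pP; apply/imsetP/idP => [[q qS q2]|pS]; last by exists p.
by rewrite (elp_pair2_inj elpP pP (subsetP SP q qS) q2).
Qed.

Lemma pair1_notin_imset2 p : p \in P -> (p.1 \in [set q.2 | q in S]) = false.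
Proof.
move=> pP; apply/imsetP => -[q qS q2].
by case/eqP: (elp_pair12_neq elpP pP (subsetP SP q qS)).
Qed.

Lemma pair2_notin_imset1 p : p \in P -> (p.2 \in [set q.1 | q in S]) = false.
Proof.
move=> pP; apply/imsetP => -[q qS q1].
by case/eqP: (elp_pair12_neq elpP (subsetP SP q qS) pP); rewrite -q1.
Qed.

Lemma LR_notin_imset x : x \in L :|: R ->
  (x \in [set q.1 | q in S]) = false /\ (x \in [set q.2 | q in S]) = false.
Proof.
move=> xLR; split; apply/imsetP => -[q qS qx]; move: xLR; rewrite qx.
  by case/andP: (elp_pair_notLR elpP (subsetP SP q qS)) => /negbTE ->.
by case/andP: (elp_pair_notLR elpP (subsetP SP q qS)) => _ /negbTE ->.
Qed.

Lemma ss_word_balance x :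
  ss_word d x + (x \in [set q.2 | q in S]) = elp_word L R P x + (x \in [set q.1 | q in S]).
Proof.
case: (boolP (x \in L :|: R)) => [xLR|].
  by case: (LR_notin_imset xLR) => -> ->; rewrite ss_word_LR.
rewrite (elp_LR_endpoint elpP) negbK => /exists_inP[p pP /orP[] /eqP <-].
- rewrite ss_word_pair1 // elp_word_pair1 // pair1_in_imset1 // pair1_notin_imset2 //.
  by rewrite addn0.
- rewrite ss_word_pair2 // elp_word_pair2 // pair2_in_imset2 // pair2_notin_imset1 //.
  by case: (p \in S).
Qed.

Lemma weight_ss_word :
  weight (ss_word d) + \sum_(p in S) p.2 = weight (elp_word L R P) + \sum_(p in S) p.1.
Proof.
have S_inj (f : 'I_N * 'I_N -> 'I_N) :
    (forall p q, p \in P -> q \in P -> f p = f q -> p = q) -> {in S &, injective f}.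
  by move=> f_inj p q pS qS; apply: f_inj; apply: (subsetP SP).
have sum_imset (f : 'I_N * 'I_N -> 'I_N) : {in S &, injective f} ->
    \sum_(p in S) (f p : nat) = \sum_x (x \in [set f q | q in S]) * x.
  move=> f_inj; rewrite -(big_imset (fun x : 'I_N => x : nat) f_inj) /= big_mkcond.
  by apply: eq_bigr => x _; case: (_ \in _); rewrite ?mul1n.
rewrite !sum_imset; [|exact: S_inj (elp_pair1_inj elpP)|exact: S_inj (elp_pair2_inj elpP)].
by rewrite /weight -!big_split; apply: eq_bigr => x _; rewrite /= -!mulnDl ss_word_balance.
Qed.

Lemma sum_pair1_lt_sum_pair2 : 0 < #|S| -> \sum_(p in S) p.1 < \sum_(p in S) p.2.
Proof.
case/card_gt0P => p pS; rewrite (bigD1 p) //= [X in _ < X](bigD1 p) //= -addSn.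
rewrite leq_add ?(elp_pair_lt elpP (subsetP SP p pS)) //.
by apply: leq_sum => q /andP[qS _]; apply/ltnW/(elp_pair_lt elpP)/(subsetP SP).
Qed.

End DirectedLinkPattern.

Section Feasibility.
Variables (N : nat) (w w' : {ffun 'I_N -> bool}) (d : delp N).
Hypothesis w'_feas : feasible_for w w' d.

Let d_ok : is_delp d. Proof. by case/and3P: w'_feas. Qed.
Let w'E x : elp_word d.1.1.1 d.1.1.2 d.1.2 x = w' x.
Proof. by case/and3P: w'_feas => _ /forallP/(_ x)/eqP. Qed.
Let wE x : ss_word d x = w x.
Proof. by case/and3P: w'_feas => _ _ /forallP/(_ x)/eqP. Qed.

Lemma feasible_for_RL0 : RL d = 0 -> w = w'.
Proof.
move/eqP; rewrite cards_eq0 => /eqP S0; apply/ffunP => x.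
have := ss_word_balance d_ok x; rewrite S0 !imset0 !in_set0 !addn0 wE w'E.
by case: (w x); case: (w' x).
Qed.

Lemma feasible_for_weight_lt : 0 < RL d -> weight w < weight w'.
Proof.
move=> /(sum_pair1_lt_sum_pair2 d_ok); have := weight_ss_word d_ok.
by rewrite (eq_weight wE) (eq_weight w'E); lia.
Qed.

End Feasibility.

Section CanonicalPattern.
Variables (N : nat) (w : {ffun 'I_N -> bool}).

Definition letter (i : nat) : bool := [exists x : 'I_N, (val x == i) && w x].

Lemma letterE (x : 'I_N) : letter x = w x.
Proof.
apply/existsP/idP => [[y /andP[/eqP/val_inj -> //]]|wx].
by exists x; rewrite eqxx.
Qed.

(* Lattice path of w: a 0 is an up-step and a 1 a down-step. *)
Definition height (k : nat) : int :=
  (\sum_(0 <= i < k) (if letter i then -1 else 1))%R.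

Lemma heightS k : height k.+1 = (height k + (if letter k then -1 else 1))%R.
Proof. by rewrite /height big_nat_recr. Qed.

Lemma height_step k : height k.+1 = (height k + 1)%R \/ height k.+1 = (height k - 1)%R.
Proof. by rewrite heightS; case: (letter k); [right|left]. Qed.

Lemma height_ord (x : 'I_N) : height x.+1 = (height x + (if w x then -1 else 1))%R.
Proof. by rewrite heightS letterE. Qed.

Definition canon_pairs : {set 'I_N * 'I_N} :=
  [set p : 'I_N * 'I_N | (p.1 < p.2) && (height p.2.+1 == height p.1) &&
     [forall k : 'I_N, (p.1 < k <= p.2) ==> (height p.1 < height k)%R]].

Definition canon_left : {set 'I_N} :=
  [set x : 'I_N | [forall k : 'I_N, (k <= x) ==> (height x.+1 < height k)%R]].

Definition canon_right : {set 'I_N} :=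
  [set x : 'I_N | [forall k : 'I_N.+1, (x < k) ==> (height x < height k)%R]].

Lemma canon_pairsP (p : 'I_N * 'I_N) :
  reflect [/\ p.1 < p.2, height p.2.+1 = height p.1 &
              forall k, p.1 < k <= p.2 -> (height p.1 < height k)%R]
          (p \in canon_pairs).
Proof.
rewrite inE; apply: (iffP idP).
- move=> /andP[/andP[lt /eqP e] /forallP H]; split=> // k /andP[a b].
  have kN : k < N by apply: leq_ltn_trans b (ltn_ord _).
  by have := H (Ordinal kN); rewrite /= a b.
- move=> [lt e H]; rewrite lt e eqxx /=; apply/forallP=> k; apply/implyP.
  exact: H.
Qed.

Lemma canon_leftP (x : 'I_N) :
  reflect (forall k, k <= x -> (height x.+1 < height k)%R) (x \in canon_left).
Proof.
rewrite inE; apply: (iffP forallP) => H k.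
- move=> kx; have kN : k < N by apply: leq_ltn_trans kx (ltn_ord _).
  by have := H (Ordinal kN); rewrite /= kx.
- by apply/implyP => hk; apply: H.
Qed.

Lemma canon_rightP (x : 'I_N) :
  reflect (forall k, x < k <= N -> (height x < height k)%R) (x \in canon_right).
Proof.
rewrite inE; apply: (iffP forallP) => H k.
- move=> /andP[a b]; have kN : k < N.+1 by [].
  by have := H (Ordinal kN); rewrite /= a.
- by apply/implyP => hk; apply: H; rewrite hk /= -ltnS ltn_ord.
Qed.

Lemma canon_pair1_inj (p q : 'I_N * 'I_N) :
  p \in canon_pairs -> q \in canon_pairs -> p.1 = q.1 -> p = q.
Proof.
move: p q => [a b] [c d] /canon_pairsP /= [l1 e1 H1] /canon_pairsP /= [l2 e2 H2] /= E.
subst c; congr pair; apply/val_inj/eqP; rewrite eqn_leq; apply/andP; split;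
  rewrite leqNgt; apply/negP => lt.
- by have := H1 d.+1; rewrite (leq_trans l2) //= => /(_ lt); lia.
- by have := H2 b.+1; rewrite (leq_trans l1) //= => /(_ lt); lia.
Qed.

Lemma canon_pair2_inj (p q : 'I_N * 'I_N) :
  p \in canon_pairs -> q \in canon_pairs -> p.2 = q.2 -> p = q.
Proof.
move: p q => [a b] [c d] /canon_pairsP /= [l1 e1 H1] /canon_pairsP /= [l2 e2 H2] /= E.
subst d; congr pair; apply/val_inj/eqP; rewrite eqn_leq; apply/andP; split;
  rewrite leqNgt; apply/negP => lt.
- by have := H2 a; rewrite lt (ltnW l1) /= => /(_ isT); lia.
- by have := H1 c; rewrite lt (ltnW l2) /= => /(_ isT); lia.
Qed.

Lemma canon_pair12_neq (p q : 'I_N * 'I_N) :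
  p \in canon_pairs -> q \in canon_pairs -> p.1 != q.2.
Proof.
move: p q => [a b] [c d] /canon_pairsP /= [l1 e1 H1] /canon_pairsP /= [l2 e2 H2] /=.
apply/eqP => E; subst d.
have := H1 a.+1; rewrite ltnSn l1 => /(_ isT).
by have := H2 a; rewrite l2 leqnn => /(_ isT); lia.
Qed.

Lemma canon_pair_from (x : 'I_N) : x \notin canon_right ->
  height x.+1 = (height x + 1)%R -> exists2 p, p \in canon_pairs & p.1 = x.
Proof.
move=> nR hx.
have ex : exists k, (x < k <= N) && (height k <= height x)%R.
  move: nR; rewrite inE negb_forall => /existsP [k]; rewrite negb_imply ltNge negbK.
  by move=> /andP[xk hk]; exists k; rewrite xk hk -ltnS ltn_ord.
case: (ex_minnP ex) => -[|j] /andP[/andP[xm jN] hm] mmin //.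
have jx : x < j.
  rewrite ltn_neqAle -ltnS xm andbT; apply/eqP => E; subst j.
  by move: hm; rewrite hx; lia.
have hk k : x < k <= j -> (height x < height k)%R.
  move=> /andP[a b]; rewrite ltNge; apply/negP => hk.
  by have := mmin k; rewrite a hk (leq_trans b) ?(ltnW jN) //= => /(_ isT); lia.
exists (x, Ordinal jN) => //; apply/canon_pairsP; split=> //=.
by have := hk j; rewrite jx leqnn => /(_ isT); have := height_step j; lia.
Qed.

Lemma canon_pair_to (x : 'I_N) : x \notin canon_left ->
  height x.+1 = (height x - 1)%R -> exists2 p, p \in canon_pairs & p.2 = x.
Proof.
move=> nL hx.
have ex : exists k, (k <= x) && (height k <= height x.+1)%R.
  move: nL; rewrite inE negb_forall => /existsP [k]; rewrite negb_imply ltNge negbK.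
  by move=> /andP[xk hk]; exists k; rewrite xk hk.
have ub i : (i <= x) && (height i <= height x.+1)%R -> i <= x by case/andP.
case: (ex_maxnP ex ub) => m /andP[mx hm] mmax.
have mlx : m < x.
  rewrite ltn_neqAle mx andbT; apply/eqP => E; subst m.
  by move: hm; rewrite hx; lia.
have mN : m < N by apply: ltn_trans mlx (ltn_ord _).
have hk k : m < k <= x -> (height x.+1 < height k)%R.
  move=> /andP[a b]; rewrite ltNge; apply/negP => hk.
  by have := mmax k; rewrite b hk /= => /(_ isT); lia.
have e : height x.+1 = height m.
  have := hk m.+1; rewrite ltnSn mlx => /(_ isT).
  by have := height_step m; move: hm; lia.
exists (Ordinal mN, x) => //; apply/canon_pairsP; split=> //= k kk.
by rewrite -e; apply: hk.
Qed.

Lemma canon_left_right_disjoint : [disjoint canon_left & canon_right].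
Proof.
apply/pred0P => x /=; apply/negP => /andP[/canon_leftP hL /canon_rightP hR].
have := hL x (leqnn _); have := hR x.+1; rewrite ltnSn ltn_ord => /(_ isT); lia.
Qed.

Lemma canon_left_lt_right l r : l \in canon_left -> r \in canon_right -> l < r.
Proof.
move=> /canon_leftP hl /canon_rightP hr; rewrite ltnNge; apply/negP => rl.
by have := hl r rl; have := hr l.+1; rewrite ltnS rl ltn_ord => /(_ isT); lia.
Qed.

Lemma canon_pair_notLR p x : p \in canon_pairs -> (p.1 == x) || (p.2 == x) ->
  x \notin canon_left :|: canon_right.
Proof.
move: p => [a b] /canon_pairsP /= [l e H] /orP[] /eqP <-; rewrite in_setU;
  apply/norP; split; apply/negP.
- move=> /canon_leftP /(_ a (leqnn _)).
  by have := H a.+1; rewrite ltnSn l => /(_ isT); lia.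
- move=> /canon_rightP /(_ b.+1); rewrite ltnS (ltnW l) ltn_ord => /(_ isT).
  by lia.
- by move=> /canon_leftP /(_ a (ltnW l)); lia.
- move=> /canon_rightP /(_ b.+1); rewrite ltnSn ltn_ord => /(_ isT).
  by have := H b; rewrite l leqnn => /(_ isT); lia.
Qed.

Lemma canon_LR_endpoint x : (x \in canon_left :|: canon_right) =
  ~~ [exists p in canon_pairs, (p.1 == x) || (p.2 == x)].
Proof.
apply/idP/idP => [xLR|]; first by apply/exists_inP => -[p pP /(canon_pair_notLR pP)]; rewrite xLR.
apply: contraR; rewrite in_setU => /norP[nL nR].
case: (height_step x) => hx.
- by case: (canon_pair_from nR hx) => p pP px; apply/exists_inP; exists p; rewrite ?px ?eqxx.
- case: (canon_pair_to nL hx) => p pP px; apply/exists_inP; exists p; rewrite ?px ?eqxx ?orbT //.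
Qed.

Lemma canon_pairs_disjoint p q : p \in canon_pairs -> q \in canon_pairs -> p != q ->
  [&& p.1 != q.1, p.1 != q.2, p.2 != q.1 & p.2 != q.2].
Proof.
move=> pP qP neq; apply/and4P; split; apply: contra_neq neq => E.
- exact: canon_pair1_inj.
- by have := canon_pair12_neq pP qP; rewrite E eqxx.
- by have := canon_pair12_neq qP pP; rewrite E eqxx.
- exact: canon_pair2_inj.
Qed.

Lemma canon_noncrossing p q : p \in canon_pairs -> q \in canon_pairs ->
  ~~ [&& p.1 < q.1, q.1 < p.2 & p.2 < q.2].
Proof.
move: p q => [a b] [c d] /canon_pairsP /= [_ e H] /canon_pairsP /= [_ e' H'].
apply/and3P => -[ac cb bd].
have := H c; rewrite ac (ltnW cb) => /(_ isT).
by have := H' b.+1; rewrite ltnS (ltnW cb) bd => /(_ isT); lia.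
Qed.

Lemma canon_pair_avoids_LR p x : p \in canon_pairs ->
  x \in canon_left :|: canon_right -> ~~ ((p.1 < x) && (x < p.2)).
Proof.
move: p => [a b] /canon_pairsP /= [l e H].
rewrite in_setU => /orP[/canon_leftP hL|/canon_rightP hR]; apply/andP => -[ax xb].
- have := hL a (ltnW ax).
  by have := H x.+1; rewrite ltnS (ltnW ax) xb => /(_ isT); lia.
- have := hR b.+1; rewrite ltnS (ltnW xb) ltn_ord => /(_ isT).
  by have := H x; rewrite ax (ltnW xb) => /(_ isT); lia.
Qed.

Lemma canon_is_elp : is_elp canon_left canon_right canon_pairs.
Proof.
apply/and5P; split; last (apply/and3P; split).
- exact: canon_left_right_disjoint.
- by apply/forall_inP => l lL; apply/forall_inP => r rR; apply: canon_left_lt_right.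
- by apply/forall_inP => p /canon_pairsP[].
- by apply/forallP => x; rewrite canon_LR_endpoint.
- apply/forall_inP => p pP; apply/forall_inP => q qP; apply/implyP.
  exact: canon_pairs_disjoint.
- by apply/forall_inP => p pP; apply/forall_inP => q qP; apply: canon_noncrossing.
- by apply/forall_inP => p pP; apply/forall_inP => x; apply: canon_pair_avoids_LR.
Qed.

Lemma canon_elp_word x : elp_word canon_left canon_right canon_pairs x = w x.
Proof.
have hx := height_ord x.
rewrite /elp_word; case: ifP => [/canon_leftP /(_ x (leqnn _))|xnL].
  by move: hx; case: (w x) => //; lia.
case: ifP => [/canon_rightP /(_ x.+1)|xnR].
  by rewrite ltnSn ltn_ord => /(_ isT); move: hx; case: (w x) => //; lia.
apply/exists_inP/idP => [[[a b] /canon_pairsP /= [l e H] /eqP bx]|wx].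
  subst b; have := H x; rewrite l leqnn => /(_ isT).
  by move: hx; case: (w x) => //; lia.
rewrite wx in hx; case: (canon_pair_to (negbT xnL) hx) => p pP px.
by exists p; rewrite ?px.
Qed.

Definition canon_delp : delp N := (canon_left, canon_right, canon_pairs, set0).

Lemma canon_delp_feasible : feasible_for w w canon_delp.
Proof.
apply/and3P; split.
- by rewrite /is_delp canon_is_elp sub0set.
- by apply/forallP => x; rewrite canon_elp_word.
- apply/forallP => x; rewrite -canon_elp_word /ss_word /elp_word /=.
  do 2 case: ifP => // _.
  by apply/eqP/eq_existsb => p; rewrite in_set0 andbT andbF orbF.
Qed.

End CanonicalPattern.

Lemma Mentry_diag N (w : {ffun 'I_N -> bool}) : Mentry w w = 1%R.
Proof.
rewrite /Mentry; case: pickP => [d d_feas|/(_ (canon_delp w))]; last first.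
  by rewrite canon_delp_feasible.
by case: (posnP (RL d)) => [->|/(feasible_for_weight_lt d_feas)]; rewrite ?ltnn.
Qed.

Lemma Mentry_support N (w w' : {ffun 'I_N -> bool}) :
  Mentry w w' != 0%R -> w = w' \/ weight w < weight w'.
Proof.
rewrite /Mentry; case: pickP => [d d_feas _|_]; last by rewrite eqxx.
case: (posnP (RL d)) => [/(feasible_for_RL0 d_feas)|/(feasible_for_weight_lt d_feas)];
  by [left|right].
Qed.

Theorem proposition2p8 (N0 N1 : nat) : Mmat N0 N1 \in unitmx.
Proof.
rewrite unitmxE (det_potential_unitriangular (A := Mmat N0 N1)
  (G := fun i => weight (val (enum_val i)))) ?unitr1 // => [i|i j].
  by rewrite mxE Mentry_diag.
rewrite mxE => /Mentry_support [w_eq|]; [left|by right].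
exact/enum_val_inj/val_inj.
Qed.
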